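(* Let $d\ge0$ and $\alpha_i\in(0,1/i]$ for every $i\in\{1,\dots,d+1\}$, and consider $P=\mathbb Z_{\ge0}^{d+1}$. Then for every $v\in P$ and every integer $t\ge0$, $$\sum_{u\in L_t}p(u\to v)\le1.$$
   Context: Finite model: $P=\mathbb{Z}_{\ge0}^{d+1}$ with $u\le v$ iff $v-u\in\mathbb{Z}_{\ge0}^{d+1}$; $L_t$ = tuples with coordinate sum $t$; $\mathfrak p(v)$ = set of elements covered by $v$, so $|\mathfrak p(v)|$ is the number of positive coordinates of $v$. Path weights: each covering pair $u\lessdot v$ gives a directed edge $u\to v$ of weight $\alpha_{|\mathfrak p(v)|}$; for $u,v\in P$, $p(u\to v)$ is the sum over all directed paths (saturated chains) from $u$ to $v$ of the product of edge weights, with $p(v\to v)=1$ and $p(u\to v)=0$ if $u\not\le v$. *)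

From mathcomp Require Import all_boot all_order all_algebra.
Set Implicit Arguments. Unset Strict Implicit. Unset Printing Implicit Defensive.
Import Order.TTheory GRing.Theory Num.Theory.
Local Open Scope ring_scope.

Definition point (d : nat) := {ffun 'I_d.+1 -> nat}.

Definition psum d (v : point d) : nat := (\sum_(i < d.+1) v i)%N.

Definition npos d (v : point d) : nat := #|[set i | (0 < v i)%N]|.

Definition walk d (u : point d) (s : seq 'I_d.+1) : point d :=
  [ffun i => (u i + count_mem i s)%N].

(* Weight of the saturated chain from u given by steps s: product over
   its edges w -> w' of alpha_{|p(w')|}. *)
Definition chain_weight (R : nzRingType) d (alpha : nat -> R)
  (u : point d) (s : seq 'I_d.+1) : R :=
  \prod_(j < size s) alpha (npos (walk u (take j.+1 s))).

(* p(u -> v): sum over all saturated chains from u to v (encoded by their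
   step sequences, of length psum v - psum u) of the chain weights.
   Gives 1 when u = v (empty chain) and 0 when u is not <= v. *)
Definition pw (R : nzRingType) d (alpha : nat -> R) (u v : point d) : R :=
  \sum_(s : (psum v - psum u).-tuple 'I_d.+1 | walk u s == v)
     chain_weight alpha u s.

Definition of_bounded d t (f : {ffun 'I_d.+1 -> 'I_t.+1}) : point d :=
  [ffun i => nat_of_ord (f i)].

(* \sum_{u in L_t} p(u -> v); every u in L_t has coordinates <= t,
   so L_t is enumerated by bounded functions with coordinate sum t. *)
Definition level_sum (R : nzRingType) d (alpha : nat -> R) (t : nat)
  (v : point d) : R :=
  \sum_(f : {ffun 'I_d.+1 -> 'I_t.+1} | psum (of_bounded f) == t)
     pw alpha (of_bounded f) v.

(* Let p_n(u -> v) be the sum over chains of length exactly n.  Splitting off the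
   last edge gives p_(n+1)(u -> v) = (sum over positive coordinates i of v of
   p_n(u -> v - e_i)) * alpha_(|p(v)|), and the same recursion holds after summing
   u over L_t.  Since that sum has |p(v)| terms and alpha_k <= 1/k, the bound
   "at most 1" propagates from n = 0, where at most one u of L_t equals v. *)
From mathcomp Require Import all_boot all_order all_algebra.
Import Order.TTheory GRing.Theory Num.Theory.
Set Implicit Arguments. Unset Strict Implicit. Unset Printing Implicit Defensive.
Local Open Scope ring_scope.

Lemma big_tuple_rcons (V : nmodType) (T : finType) n
    (F : n.+1.-tuple T -> V) :
  \sum_(s : n.+1.-tuple T) F s =
  \sum_(i : T) \sum_(s : n.-tuple T) F [tuple of rcons s i].
Proof.
rewrite pair_big /=.
pose join (p : T * n.-tuple T) := [tuple of rcons p.2 p.1].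
pose split (s : n.+1.-tuple T) :=
  (last (thead s) (behead s), belast_tuple (thead s) (behead_tuple s)).
rewrite (reindex join) //; exists split => [[i s] _ | s _].
- rewrite /split /join /=; congr pair.
    by case: s => [[|x s] ?]; rewrite /thead (tnth_nth i) /= ?last_rcons.
  apply: val_inj; case: s => [[|x s] ?] //=.
  by rewrite /thead (tnth_nth x) /= belast_rcons.
- apply: val_inj; case: s => [[|x s] ?] //=.
  by rewrite /thead (tnth_nth x) /= -lastI.
Qed.

Section ChainSums.
Variables (d : nat) (R : nzRingType) (alpha : nat -> R).

Definition chain_sum n (u v : point d) : R :=
  \sum_(s : n.-tuple 'I_d.+1 | walk u s == v) chain_weight alpha u s.

Definition decr_coord (v : point d) (i : 'I_d.+1) : point d :=
  [ffun j => (v j - (j == i))%N].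

Lemma walk_rcons u (s : seq 'I_d.+1) i :
  walk u (rcons s i) = [ffun j => (walk u s j + (j == i))%N].
Proof.
apply/ffunP => j; rewrite !ffunE -cats1 count_cat /= addn0 addnA.
by rewrite eq_sym.
Qed.

Lemma eq_walk_rcons u s i v :
  (walk u (rcons s i) == v) = (0 < v i)%N && (walk u s == decr_coord v i).
Proof.
rewrite walk_rcons; apply/eqP/andP => [<- | [vi_gt0 /eqP ->]].
  rewrite ffunE eqxx addn1; split=> //.
  by apply/eqP/ffunP => j; rewrite !ffunE addnK.
by apply/ffunP => j; rewrite !ffunE subnK //; case: eqP => [->|].
Qed.

Lemma chain_weight_rcons u (s : seq 'I_d.+1) i :
  chain_weight alpha u (rcons s i) =
  chain_weight alpha u s * alpha (npos (walk u (rcons s i))).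
Proof.
rewrite /chain_weight size_rcons big_ord_recr /=; congr (_ * _).
  apply: eq_bigr => j _; rewrite -cats1 take_cat.
  case: ltnP => // s_le_j.
  have -> : j.+1 = size s by apply/eqP; rewrite eqn_leq s_le_j ltn_ord.
  by rewrite subnn take0 cats0 take_size.
by rewrite take_oversize // size_rcons.
Qed.

Lemma chain_sum0 u v : chain_sum 0 u v = (u == v)%:R.
Proof.
rewrite /chain_sum big_mkcond (big_pred1 [tuple]) /=; last first.
  by move=> s; apply/esym/eqP; exact: tuple0.
have -> : walk u [tuple] = u by apply/ffunP => j; rewrite ffunE /= addn0.
by case: (u == v); rewrite // /chain_weight big_ord0.
Qed.

Lemma chain_sumS n u v :
  chain_sum n.+1 u v =
  (\sum_(i | (0 < v i)%N) chain_sum n u (decr_coord v i)) * alpha (npos v).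
Proof.
rewrite /chain_sum big_mkcond big_tuple_rcons mulr_suml [RHS]big_mkcond /=.
apply: eq_bigr => i _; case: ifP => vi_gt0; last first.
  by apply: big1 => s _; rewrite eq_walk_rcons vi_gt0.
rewrite mulr_suml [RHS]big_mkcond; apply: eq_bigr => s _ /=.
rewrite eq_walk_rcons vi_gt0 /=; case: eqP => // walk_s.
rewrite chain_weight_rcons; congr (_ * alpha (npos _)).
by apply/eqP; rewrite eq_walk_rcons vi_gt0 walk_s eqxx.
Qed.

Variable t : nat.

Definition level_chain_sum n (v : point d) : R :=
  \sum_(f : {ffun 'I_d.+1 -> 'I_t.+1} | psum (of_bounded f) == t)
     chain_sum n (of_bounded f) v.

Lemma level_chain_sumS n v :
  level_chain_sum n.+1 v =
  (\sum_(i | (0 < v i)%N) level_chain_sum n (decr_coord v i)) * alpha (npos v).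
Proof.
rewrite /level_chain_sum (eq_bigr _ (fun f _ => chain_sumS n _ v)).
by rewrite -mulr_suml exchange_big.
Qed.

Lemma level_sum_chain_sum v :
  level_sum alpha t v = level_chain_sum (psum v - t) v.
Proof. by apply: eq_bigr => f /eqP psum_f; rewrite /pw psum_f. Qed.

End ChainSums.

Lemma of_bounded_inj d t : injective (@of_bounded d t).
Proof.
move=> f g fg; apply/ffunP => j; apply: val_inj.
by have := congr1 (fun w : point d => w j) fg; rewrite !ffunE.
Qed.

Lemma npos_le d (v : point d) : (npos v <= d.+1)%N.
Proof. by rewrite -[d.+1]card_ord max_card. Qed.

Section LevelBound.
Variables (d : nat) (R : numFieldType) (alpha : nat -> R) (t : nat).
Hypothesis alpha_bounded :
  forall k, (1 <= k <= d.+1)%N -> 0 <= alpha k <= k%:R^-1.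

Lemma level_chain_sum0_le1 (v : point d) : level_chain_sum alpha t 0 v <= 1.
Proof.
rewrite /level_chain_sum; under eq_bigr do rewrite chain_sum0.
have [f0 /andP[psum_f0 /eqP f0v] | no_f] :=
  pickP [pred f | (psum (@of_bounded d t f) == t) && (of_bounded f == v)].
  rewrite (bigD1 f0) //= f0v eqxx big1 ?addr0 // => f /andP[_ f_neq].
  by rewrite -f0v (inj_eq (@of_bounded_inj d t)) (negbTE f_neq).
by rewrite big1 // => f psum_f; have := no_f f; rewrite /= psum_f; case: eqP.
Qed.

Lemma level_chain_sum_le1 n (v : point d) : level_chain_sum alpha t n v <= 1.
Proof.
elim: n v => [|n IHn] v; first exact: level_chain_sum0_le1.
rewrite level_chain_sumS.
have sum_le : \sum_(i | (0 < v i)%N) level_chain_sum alpha t n (decr_coord v i)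
              <= (npos v)%:R.
  apply: le_trans (ler_sum _ (fun i _ => IHn (decr_coord v i))) _.
  by rewrite sumr_const /npos cardsE.
case npos_v: (npos v) sum_le => [|k] sum_le.
  rewrite big_pred0 ?mul0r // => i.
  by move: npos_v; rewrite /npos cardsE => /card0_eq /(_ i); rewrite inE.
have /andP[alpha_ge0 alpha_le] : 0 <= alpha k.+1 <= k.+1%:R^-1.
  by apply: alpha_bounded; rewrite ltn0Sn -npos_v npos_le.
apply: le_trans (ler_wpM2r alpha_ge0 sum_le) _.
apply: le_trans (ler_wpM2l (ler0n _ _) alpha_le) _.
by rewrite mulfV // pnatr_eq0.
Qed.

End LevelBound.

Theorem mainTheorem8 (R : realFieldType) (d : nat) (alpha : nat -> R)
  (halpha : forall i : nat, (1 <= i <= d.+1)%N ->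
     0 < alpha i /\ alpha i <= (i%:R)^-1)
  (v : point d) (t : nat) :
  level_sum alpha t v <= 1.
Proof.
rewrite level_sum_chain_sum; apply: level_chain_sum_le1 => k k_range.
by have [/ltW -> ->] := halpha k k_range.
Qed.
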